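(* Let $d\ge2$ and $x,y,u,v\in\mathbb{R}^d_{>0}$. Then there exist $x',y',u',v'\in\mathbb{R}^2_{>0}$ such that \[ s^\pm(x',y')=s^\pm(x,y),\qquad s^\pm(u',v')=s^\pm(u,v),\qquad F_2(x',y';u',v')\ge F_d(x,y;u,v). \]
   Context: For $x,y\in\mathbb{R}^d_{>0}$ define $s^+(x,y)=\max_i \frac{y_i}{x_i}$ and $s^-(x,y)=\min_i\frac{y_i}{x_i}$. Define $F_d:(\mathbb{R}^d_{>0})^4\to\mathbb{R}_{>0}$ by $F_d(x,y;u,v)=\frac{(x\cdot u)(y\cdot v)}{(x\cdot v)(y\cdot u)}$, where $\cdot$ is the standard Euclidean dot product; $F_2$ is the case $d=2$. *)

From mathcomp Require Import all_boot all_order all_algebra.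
Set Implicit Arguments. Unset Strict Implicit. Unset Printing Implicit Defensive.
Import Order.TTheory GRing.Theory Num.Theory.
Local Open Scope ring_scope.

(* Vectors in R^n are functions 'I_n -> R. Dimension n.+1 ensures the index
   set is nonempty, so max/min are well defined (seeded by index 0). *)

Definition pos_vec (R : realFieldType) (n : nat) (x : 'I_n -> R) : Prop :=
  forall i, 0 < x i.

Definition dotv (R : realFieldType) (n : nat) (x y : 'I_n -> R) : R :=
  \sum_(i < n) x i * y i.

Definition splus (R : realFieldType) (n : nat) (x y : 'I_n.+1 -> R) : R :=
  \big[Num.max/(y ord0 / x ord0)]_(i < n.+1) (y i / x i).

Definition sminus (R : realFieldType) (n : nat) (x y : 'I_n.+1 -> R) : R :=
  \big[Num.min/(y ord0 / x ord0)]_(i < n.+1) (y i / x i).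

Definition Fd (R : realFieldType) (n : nat) (x y u v : 'I_n -> R) : R :=
  (dotv x u * dotv y v) / (dotv x v * dotv y u).

From mathcomp Require Import all_boot all_order all_algebra.
From mathcomp Require Import reals ring.
Import Order.TTheory GRing.Theory Num.Theory.
Set Implicit Arguments. Unset Strict Implicit. Unset Printing Implicit Defensive.
Local Open Scope ring_scope.

(* With weights w_i = x_i u_i and ratios s_i = y_i / x_i, t_i = v_i / u_i one has
   F_d(x,y;u,v) = E[s t] / (E[s] E[t]) for the probability measure proportional
   to w, and s, t take values in [s^-(x,y), s^+(x,y)] and [s^-(u,v), s^+(u,v)].
   The McCormick inequalities bound E[s t] from above by the two affine
   envelopes of s t on that rectangle.  A two-point measure on the corners
   (s^+, t^+) and (s^-, t^-), weighted so as to reproduce E[s] (or E[t],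
   whichever is relatively closer to its lower end), has a ratio at least as
   large; in dimension 2 such a measure is realised with the prescribed
   extreme ratios.  When F_d <= 1 any two-point corner measure will do, by
   Chebyshev's inequality. *)

Section Ratios.
Variables (R : realFieldType) (n : nat).
Implicit Types x y : 'I_n.+1 -> R.

Lemma sminus_mul_le x y i : pos_vec x -> sminus x y * x i <= y i.
Proof. by move=> px; rewrite -ler_pdivlMr //; exact: bigmin_le. Qed.

Lemma le_splus_mul x y i : pos_vec x -> y i <= splus x y * x i.
Proof. by move=> px; rewrite -ler_pdivrMr //; exact: le_bigmax. Qed.

Lemma sminus_gt0 x y : pos_vec x -> pos_vec y -> 0 < sminus x y.
Proof.
move=> px py; apply: (big_ind (fun t => 0 < t)) => [||i _]; try exact: divr_gt0.
by move=> a b a0 b0; rewrite lt_min a0 b0.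
Qed.

Lemma sminus_le_splus x y : sminus x y <= splus x y.
Proof. exact: le_trans (bigmin_le _ ord0 _) (le_bigmax _ _ ord0). Qed.

End Ratios.

Section DotProduct.
Variables (R : realFieldType) (n : nat).
Implicit Types x y u v w : 'I_n -> R.

Lemma dotvC x y : dotv x y = dotv y x.
Proof. by apply: eq_bigr => i _; rewrite mulrC. Qed.

Lemma dotvZl a x y : dotv (fun i => a * x i) y = a * dotv x y.
Proof. by rewrite /dotv mulr_sumr; apply: eq_bigr => i _; rewrite mulrA. Qed.

Lemma ler_dotvl x y w : (forall i, x i <= y i) -> (forall i, 0 <= w i) ->
  dotv x w <= dotv y w.
Proof. by move=> xy w0; apply: ler_sum => i _; exact: ler_wpM2r. Qed.

Lemma dotv_mccormick m M x y u v :
  (forall i, m * x i <= y i) -> (forall i, v i <= M * u i) ->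
  dotv y v <= M * dotv y u + m * dotv x v - m * M * dotv x u.
Proof.
move=> mxy vMu; rewrite -subr_ge0 /dotv !mulr_sumr -big_split -!sumrB /=.
apply: sumr_ge0 => i _.
have -> : M * (y i * u i) + m * (x i * v i) - m * M * (x i * u i) - y i * v i
    = (y i - m * x i) * (M * u i - v i) by ring.
by rewrite mulr_ge0 // subr_ge0.
Qed.

End DotProduct.

Lemma dotv_gt0 (R : realFieldType) (n : nat) (x y : 'I_n.+1 -> R) :
  pos_vec x -> pos_vec y -> 0 < dotv x y.
Proof.
move=> px py; rewrite /dotv big_ord_recl ltr_pwDl ?mulr_gt0 //.
by apply: sumr_ge0 => i _; rewrite mulr_ge0 ?ltW.
Qed.

Lemma dotv_ratio_bounds (R : realFieldType) (n : nat) (x y w : 'I_n.+1 -> R) :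
  pos_vec x -> (forall i, 0 <= w i) ->
  sminus x y * dotv x w <= dotv y w <= splus x y * dotv x w.
Proof.
move=> px w0; rewrite -!dotvZl; apply/andP; split; apply: ler_dotvl => // i.
- exact: sminus_mul_le.
- exact: le_splus_mul.
Qed.

Definition pair2 (T : Type) (a b : T) : 'I_2 -> T :=
  fun i => if i == ord0 then a else b.

Section TwoPoint.
Variable R : realFieldType.
Implicit Types a b c d p q m M : R.

Lemma pos_pair2 a b : 0 < a -> 0 < b -> pos_vec (pair2 a b).
Proof. by move=> a0 b0 i; rewrite /pair2; case: ifP. Qed.

Lemma dotv_pair2 a b c d : dotv (pair2 a b) (pair2 c d) = a * c + b * d.
Proof. by rewrite /dotv !big_ord_recl big_ord0 addr0. Qed.

Lemma splus_pair2 a b c d : splus (pair2 a b) (pair2 c d) = Num.max (c / a) (d / b).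
Proof. by rewrite /splus !big_ord_recl big_ord0 /= maxCA maxxx maxC. Qed.

Lemma sminus_pair2 a b c d : sminus (pair2 a b) (pair2 c d) = Num.min (c / a) (d / b).
Proof. by rewrite /sminus !big_ord_recl big_ord0 /= minCA minxx minC. Qed.

Lemma extreme_ratios_pair2 a b m M : 0 < a -> 0 < b -> m <= M ->
  splus (pair2 a b) (pair2 (M * a) (m * b)) = M /\
  sminus (pair2 a b) (pair2 (M * a) (m * b)) = m.
Proof.
move=> a0 b0 mM; rewrite splus_pair2 sminus_pair2 !mulfK ?gt_eqF //.
by rewrite max_l // min_r.
Qed.

(* The ratio E[st] / (E[s] E[t]) of the measure with masses p and q at the
   corners (M1, M2) and (m1, m2). *)
Definition corner_ratio M1 m1 M2 m2 p q :=
  (p + q) * (p * M1 * M2 + q * m1 * m2) / ((p * M1 + q * m1) * (p * M2 + q * m2)).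

Lemma corner_ratioC M1 m1 M2 m2 p q :
  corner_ratio M1 m1 M2 m2 p q = corner_ratio M2 m2 M1 m1 p q.
Proof. by rewrite /corner_ratio; congr (_ * _ / _); ring. Qed.

Lemma Fd_pair2 M1 m1 M2 m2 p q :
  Fd (pair2 p q) (pair2 (M1 * p) (m1 * q)) (pair2 1 1) (pair2 M2 m2) =
  corner_ratio M1 m1 M2 m2 p q.
Proof. by rewrite /Fd /corner_ratio !dotv_pair2; congr (_ * _^-1); ring. Qed.

Lemma corner_ratio_ge1 M1 m1 M2 m2 p q :
  0 < p -> 0 < q -> 0 < m1 <= M1 -> 0 < m2 <= M2 ->
  1 <= corner_ratio M1 m1 M2 m2 p q.
Proof.
move=> p0 q0 /andP[m10 mM1] /andP[m20 mM2].
have [M10 M20] := (lt_le_trans m10 mM1, lt_le_trans m20 mM2).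
rewrite ler_pdivlMr ?mul1r ?mulr_gt0 ?addr_gt0 ?mulr_gt0 // -subr_ge0.
have -> : (p + q) * (p * M1 * M2 + q * m1 * m2) - (p * M1 + q * m1) * (p * M2 + q * m2)
    = p * q * ((M1 - m1) * (M2 - m2)) by ring.
by rewrite !mulr_ge0 ?subr_ge0 ?(ltW p0) ?(ltW q0).
Qed.

End TwoPoint.

Section CornerBound.
Variable R : realFieldType.
Variables (X Y V Z m1 M1 m2 M2 : R).
Hypotheses (X_gt0 : 0 < X) (m1_gt0 : 0 < m1) (m2_gt0 : 0 < m2).
Hypotheses (Y_lb : m1 * X <= Y) (Y_ub : Y <= M1 * X).
Hypotheses (V_lb : m2 * X <= V) (V_ub : V <= M2 * X).
Hypothesis Z_ubY : Z <= M2 * Y + m1 * V - m1 * M2 * X.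
Hypothesis Z_ubV : Z <= M1 * V + m2 * Y - m2 * M1 * X.

Let Y_gt0 : 0 < Y. Proof. exact: lt_le_trans (mulr_gt0 m1_gt0 X_gt0) Y_lb. Qed.
Let V_gt0 : 0 < V. Proof. exact: lt_le_trans (mulr_gt0 m2_gt0 X_gt0) V_lb. Qed.

(* Masses p, q at the corners reproduce the mean Y / X of s; the hypothesis
   on the spreads makes the resulting mean of t at most V / X. *)
Lemma corner_ratio_mean_matching :
  m1 * X < Y < M1 * X ->
  (M2 - m2) * (Y - m1 * X) <= (M1 - m1) * (V - m2 * X) ->
  X * Z / (V * Y) <= corner_ratio M1 m1 M2 m2 (Y - m1 * X) (M1 * X - Y).
Proof.
move=> /andP[Y_gtlb Y_ltub] spread.
have dM1_gt0 : 0 < M1 - m1.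
  by rewrite -(ltr_pM2r X_gt0) mulrBl mul0r subr_gt0 (lt_trans Y_gtlb).
have M2_gt0 : 0 < M2 by rewrite -(ltr_pM2r X_gt0) mul0r (lt_le_trans V_gt0).
have Z_ub : Z <= M2 * (Y - m1 * X) + m1 * V.
  by rewrite (_ : _ + _ = M2 * Y + m1 * V - m1 * M2 * X) //; ring.
have D_le : (Y - m1 * X) * M2 + (M1 * X - Y) * m2 <= (M1 - m1) * V.
  rewrite -subr_ge0 (_ : _ - _ = (M1 - m1) * (V - m2 * X) - (M2 - m2) * (Y - m1 * X)).
    by rewrite subr_ge0.
  by ring.
have pq_sum : (Y - m1 * X) + (M1 * X - Y) = (M1 - m1) * X by ring.
have pq_mean : (Y - m1 * X) * M1 + (M1 * X - Y) * m1 = (M1 - m1) * Y by ring.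
have [p_gt0 q_gt0] : 0 < Y - m1 * X /\ 0 < M1 * X - Y by rewrite !subr_gt0.
move: (Y - m1 * X) (M1 * X - Y) p_gt0 q_gt0 pq_sum pq_mean Z_ub D_le
  => p q p_gt0 q_gt0 pq_sum pq_mean Z_ub D_le.
have D_gt0 : 0 < p * M2 + q * m2 by rewrite addr_gt0 ?mulr_gt0.
have ZD_le : Z * (p * M2 + q * m2) <= (p * M1 * M2 + q * m1 * m2) * V.
  apply: le_trans (ler_wpM2r (ltW D_gt0) Z_ub) _.
  rewrite mulrDl [E in _ <= E](_ : _ =
    M2 * p * ((M1 - m1) * V) + m1 * V * (p * M2 + q * m2)); last by ring.
  by rewrite [m1 * V * _]mulrC lerD2r ler_pM2l ?mulr_gt0.
rewrite /corner_ratio pq_sum pq_mean.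
rewrite [E in _ <= E](_ : _ = X / Y * ((p * M1 * M2 + q * m1 * m2) / (p * M2 + q * m2))).
  rewrite [E in E <= _](_ : _ = X / Y * (Z / V)); last by field; rewrite !gt_eqF.
  by rewrite ler_pM2l ?divr_gt0 // ler_pdivrMr // mulrAC ler_pdivlMr.
by field; rewrite !gt_eqF.
Qed.

Lemma corner_ratio_bound_le1 : X * Z <= V * Y ->
  exists p q, [/\ 0 < p, 0 < q & X * Z / (V * Y) <= corner_ratio M1 m1 M2 m2 p q].
Proof.
move=> F_le1; exists 1, 1; split => //.
have mM1 : m1 <= M1 by rewrite -(ler_pM2r X_gt0) (le_trans Y_lb).
have mM2 : m2 <= M2 by rewrite -(ler_pM2r X_gt0) (le_trans V_lb).
apply: le_trans (corner_ratio_ge1 _ _ _ _); rewrite ?m1_gt0 ?m2_gt0 //.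
by rewrite ler_pdivrMr ?mulr_gt0 // mul1r.
Qed.

(* If F_d > 1, the mean of s cannot sit at an end of [m1, M1]: each McCormick
   envelope would then force Z <= (Y / X) V. *)
Lemma corner_ratio_bound_spread :
  V * Y < X * Z ->
  (M2 - m2) * (Y - m1 * X) <= (M1 - m1) * (V - m2 * X) ->
  exists p q, [/\ 0 < p, 0 < q & X * Z / (V * Y) <= corner_ratio M1 m1 M2 m2 p q].
Proof.
move=> F_gt1 spread.
have Y_gtlb : m1 * X < Y.
  rewrite lt_neqAle Y_lb andbT; apply/eqP => eY.
  have Z_le : Z <= m1 * V.
    by rewrite (_ : m1 * V = M2 * Y + m1 * V - m1 * M2 * X) // -eY; ring.
  move: F_gt1; rewrite -eY (_ : V * (m1 * X) = X * (m1 * V)); last by ring.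
  by rewrite ltr_pM2l // ltNge Z_le.
have Y_ltub : Y < M1 * X.
  rewrite lt_neqAle Y_ub andbT; apply/eqP => eY.
  have Z_le : Z <= M1 * V.
    by rewrite (_ : M1 * V = M1 * V + m2 * Y - m2 * M1 * X) // eY; ring.
  move: F_gt1; rewrite eY (_ : V * (M1 * X) = X * (M1 * V)); last by ring.
  by rewrite ltr_pM2l // ltNge Z_le.
exists (Y - m1 * X), (M1 * X - Y); rewrite !subr_gt0 Y_gtlb Y_ltub.
by split => //; apply: corner_ratio_mean_matching => //; rewrite Y_gtlb.
Qed.

End CornerBound.

Lemma corner_ratio_bound (R : realFieldType) (X Y V Z m1 M1 m2 M2 : R) :
  0 < X -> 0 < m1 -> 0 < m2 ->
  m1 * X <= Y <= M1 * X -> m2 * X <= V <= M2 * X ->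
  Z <= M2 * Y + m1 * V - m1 * M2 * X ->
  Z <= M1 * V + m2 * Y - m2 * M1 * X ->
  exists p q, [/\ 0 < p, 0 < q & X * Z / (V * Y) <= corner_ratio M1 m1 M2 m2 p q].
Proof.
move=> X_gt0 m1_gt0 m2_gt0 /andP[Y_lb Y_ub] /andP[V_lb V_ub] Z_ubY Z_ubV.
have [F_le1 | F_gt1] := leP (X * Z) (V * Y).
  exact: corner_ratio_bound_le1.
have [spread | spread] := leP ((M2 - m2) * (Y - m1 * X)) ((M1 - m1) * (V - m2 * X)).
  exact: corner_ratio_bound_spread.
rewrite mulrC in F_gt1.
have [p [q [p_gt0 q_gt0 bound]]] := corner_ratio_bound_spread X_gt0 m2_gt0 m1_gt0
  V_lb V_ub Y_lb Y_ub Z_ubV Z_ubY F_gt1 (ltW spread).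
by exists p, q; split; rewrite // [V * Y]mulrC corner_ratioC.
Qed.

Theorem mainTheorem8 (R : realType) (n : nat)
  (x y u v : 'I_n.+2 -> R) :
  pos_vec x -> pos_vec y -> pos_vec u -> pos_vec v ->
  exists x' y' u' v' : 'I_2 -> R,
    (pos_vec x' /\ pos_vec y' /\ pos_vec u' /\ pos_vec v') /\
    [/\ splus x' y' = splus x y /\ sminus x' y' = sminus x y,
        splus u' v' = splus u v /\ sminus u' v' = sminus u v &
        Fd x y u v <= Fd x' y' u' v'].
Proof.
move=> px py pu pv.
have [m1_gt0 m2_gt0] := (sminus_gt0 px py, sminus_gt0 pu pv).
have [mM1 mM2] := (sminus_le_splus x y, sminus_le_splus u v).
have Y_bounds := dotv_ratio_bounds y px (fun i => ltW (pu i)).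
have V_bounds := dotv_ratio_bounds v pu (fun i => ltW (px i)).
rewrite !(dotvC u) (dotvC v) in V_bounds.
have Z_ubY := dotv_mccormick (sminus_mul_le y ^~ px) (le_splus_mul v ^~ pu).
have Z_ubV := dotv_mccormick (sminus_mul_le v ^~ pu) (le_splus_mul y ^~ px).
rewrite !(dotvC v) !(dotvC u) in Z_ubV.
have [p [q [p_gt0 q_gt0 bound]]] :=
  corner_ratio_bound (dotv_gt0 px pu) m1_gt0 m2_gt0 Y_bounds V_bounds Z_ubY Z_ubV.
exists (pair2 p q), (pair2 (splus x y * p) (sminus x y * q)), (pair2 1 1),
  (pair2 (splus u v) (sminus u v)).
have [M1_gt0 M2_gt0] := (lt_le_trans m1_gt0 mM1, lt_le_trans m2_gt0 mM2).
split; first by split; [|split; [|split]]; apply: pos_pair2; rewrite ?mulr_gt0.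
split; [exact: extreme_ratios_pair2 | | by rewrite Fd_pair2].
by have := extreme_ratios_pair2 ltr01 ltr01 mM2; rewrite !mulr1.
Qed.
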